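(* The class $\mathcal S^*$ has the expansion property relative to the class $\mathcal S$.
   Context: Expansion property: let $L\subseteq L^*$ be relational languages, $\mathcal K$ a class of finite $L$-structures and $\mathcal K^*$ a class of finite $L^*$-structures whose $L$-reducts lie in $\mathcal K$. $\mathcal K^*$ has the expansion property relative to $\mathcal K$ if for every $\mathbf A\in\mathcal K$ there is $\mathbf B\in\mathcal K$ such that for all $\mathbf A^*,\mathbf B^*\in\mathcal K^*$ whose $L$-reducts are $\mathbf A$ and $\mathbf B$ respectively, $\mathbf A^*$ embeds into $\mathbf B^*$. A directed graph $(A,E)$ is complete multipartite if the relation ''$u=v$, or neither $E(u,v)$ nor $E(v,u)$'' is an equivalence relation on $A$; its classes are the parts. $\mathcal S$ is the class of finite complete multipartite directed graphs satisfying the parity constraint: for any two distinct parts $P,P'$, distinct $u,v\in P$ and distinct $x,y\in P'$, the number of edges directed from $\{u,v\}$ to $\{x,y\}$ is even. $\mathcal S^*$ is the class of structures $(A,E,R,<)$ ($R,<$ binary) obtained as follows: $\mathbf A=(A,E)\in\mathcal S$ has $k$ parts; choose $\bar{\mathbf A}=(\bar A,\bar E)\in\mathcal S$ with $k$ parts, containing $\mathbf A$ as an induced substructure, and containing a set $\{t_0,\dots,t_{k-1}\}$ disjoint from $A$ with exactly one $t_i$ in each part of $\bar{\mathbf A}$ and $\bar E(t_i,t_j)$ whenever $i<j$; set $R(x,u)$ iff $x,u\in A$ lie in different parts and $\bar E(t,u)$, where $t$ is the $t_i$ lying in the part of $x$; and let $<$ be the restriction to $A$ of a linear order on $\bar A$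 in which every part of $\bar{\mathbf A}$ is an interval and $t_0<t_1<\dots<t_{k-1}$. *)

From mathcomp Require Import all_boot.
Set Implicit Arguments. Unset Strict Implicit. Unset Printing Implicit Defensive.

Definition digraph (T : finType) (E : rel T) : Prop :=
  (forall x, ~~ E x x) /\ (forall x y, E x y -> ~~ E y x).

Definition sameP (T : finType) (E : rel T) : rel T :=
  fun u v => (u == v) || (~~ E u v && ~~ E v u).

(* complete multipartite: sameP is an equivalence relation
   (reflexivity and symmetry hold by definition, we state all three) *)
Definition complete_multipartite (T : finType) (E : rel T) : Prop :=
  digraph E /\
  (forall u, sameP E u u) /\
  (forall u v, sameP E u v -> sameP E v u) /\
  (forall u v w, sameP E u v -> sameP E v w -> sameP E u w).

Definition nparts (T : finType) (E : rel T) : nat :=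
  #|[set [set y | sameP E x y] | x : T]|.

Definition parity_ok (T : finType) (E : rel T) : Prop :=
  forall u v x y : T,
    ~~ sameP E u x -> sameP E u v -> sameP E x y -> u != v -> x != y ->
    ~~ odd (E u x + E u y + E v x + E v y).

Definition inS (T : finType) (E : rel T) : Prop :=
  complete_multipartite E /\ parity_ok E.

Definition strict_linear (T : finType) (lt : rel T) : Prop :=
  (forall x, ~~ lt x x) /\
  (forall x y z, lt x y -> lt y z -> lt x z) /\
  (forall x y, x != y -> lt x y || lt y x).

Definition inSstar (T : finType) (E R Lt : rel T) : Prop :=
  inS E /\
  exists (Tb : finType) (Eb : rel Tb) (f : T -> Tb)
         (t : 'I_(nparts E) -> Tb) (ltb : rel Tb),
    inS Eb /\ nparts Eb = nparts E /\
    (injective f /\ (forall x y, E x y = Eb (f x) (f y))) /\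
    (forall i x, t i != f x) /\
    (forall y, exists i, sameP Eb (t i) y /\
                    (forall j, sameP Eb (t j) y -> j = i)) /\
    (forall i j : 'I_(nparts E), (i < j)%N -> Eb (t i) (t j)) /\
    strict_linear ltb /\
    (forall a b c, sameP Eb a c -> ltb a b -> ltb b c -> sameP Eb a b) /\
    (forall i j : 'I_(nparts E), (i < j)%N -> ltb (t i) (t j)) /\
    (forall x u, R x u <->
            (~~ sameP E x u /\
             exists i, sameP Eb (t i) (f x) /\ Eb (t i) (f u))) /\
    (forall x y, Lt x y = ltb (f x) (f y)).

Definition embeds_star (A B : finType) (EA RA LA : rel A) (EB RB LB : rel B) : Prop :=
  exists g : A -> B, injective g /\
    forall x y, EA x y = EB (g x) (g y) /\ RA x y = RB (g x) (g y) /\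
                LA x y = LB (g x) (g y).

Definition expansion_property_S : Prop :=
  forall (A : finType) (EA : rel A), inS EA ->
    exists (B : finType) (EB : rel B), inS EB /\
      forall (RA LA : rel A) (RB LB : rel B),
        inSstar EA RA LA -> inSstar EB RB LB ->
        embeds_star EA RA LA EB RB LB.

From Pilot Require Import Defs.
From mathcomp Require Import all_boot zify.
Set Implicit Arguments. Unset Strict Implicit. Unset Printing Implicit Defensive.

(* An expansion (A, E, R, <) in S^* is determined by a numbering [p] of the parts
   (following t_0 < ... < t_(k-1)), the bits [rho i x] = E(t_i, x) and the order
   inside each part: parity on x, t_(p x), u, t_(p u) expresses the edges between
   distinct parts through [p] and [rho], and as parts are intervals the order
   between them is that of their indices ([expansion_coding]).  A map preserving
   these data is an embedding ([coding_embedding]).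
   We take for B the structure B_N whose parts are the coordinates q < N, the
   vertices of part q being the vectors of the cube {0,1}^N ([cube_edge]).  Each
   part of an expansion of B_N carries a linear order on the cube; a Ramsey
   argument on universal families ([cube_chains]) makes all but few coordinates
   free for increasing chains, a greedy choice ([sparse_subset]) selects parts
   avoiding each other's exceptional coordinates, and A embeds part by part
   along such chains ([embeds_into_cube]). *)

(* [Defs.sameP] is shadowed by the reflection lemma [ssrbool.sameP]. *)
Local Notation same := Defs.sameP.

Section StrictLinear.
Variables (T : finType) (ord : rel T).
Hypothesis ord_linear : strict_linear ord.

Lemma ord_irr x : ~~ ord x x.
Proof. by case: ord_linear. Qed.

Lemma ord_trans x y z : ord x y -> ord y z -> ord x z.
Proof. by case: ord_linear => _ [trans _]; apply: trans. Qed.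

Lemma ord_total x y : x != y -> ord x y || ord y x.
Proof. by case: ord_linear => _ [_ total]; apply: total. Qed.

Lemma ord_asym x y : ord x y -> ~~ ord y x.
Proof. by move=> xy; apply/negP => /(ord_trans xy); apply/negP/ord_irr. Qed.

Lemma increasingE (w : nat -> T) S :
  (forall s, s.+1 < S -> ord (w s) (w s.+1)) ->
  forall s s', s < S -> s' < S -> ord (w s) (w s') = (s < s').
Proof.
move=> step.
have lt_ord s s' : s < s' -> s' < S -> ord (w s) (w s').
  elim: s' => // s' IH; rewrite ltnS leq_eqVlt => /predU1P[<- | lt_ss'] lt_s'S.
    exact: step.
  exact: ord_trans (IH lt_ss' (ltnW lt_s'S)) (step _ lt_s'S).
move=> s s' ltsS lts'S; case: ltngtP => [lt_ss' | lt_s's | <-].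
- exact: lt_ord.
- exact/negbTE/ord_asym/lt_ord.
- exact/negbTE/ord_irr.
Qed.

Definition rank (W : {set T}) (w : T) := #|[set v in W | ord v w]|.

Lemma rank_ltE (W : {set T}) v w : v \in W -> w \in W ->
  (rank W v < rank W w) = ord v w.
Proof.
have rank_lt u u' : u \in W -> ord u u' -> rank W u < rank W u'.
  move=> uW uu'; apply/proper_card/properP; split.
    by apply/subsetP => z; rewrite !inE => /andP[-> /ord_trans->].
  by exists u; rewrite !inE ?uW ?uu' // (negbTE (ord_irr u)) andbF.
move=> vW wW; apply/idP/idP => [lt_vw | /(rank_lt _ _ vW)//].
case: (eqVneq v w) => [eq_vw | ne_vw]; first by rewrite eq_vw ltnn in lt_vw.
case/orP: (ord_total ne_vw) => // /(rank_lt _ _ wW).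
by rewrite ltnNge (ltnW lt_vw).
Qed.

Lemma rank_inj (W : {set T}) v w :
  v \in W -> w \in W -> rank W v = rank W w -> v = w.
Proof.
move=> vW wW eq_rank; case: (eqVneq v w) => // /ord_total/orP[] lt.
  by move: lt; rewrite -(rank_ltE vW wW) eq_rank ltnn.
by move: lt; rewrite -(rank_ltE wW vW) eq_rank ltnn.
Qed.

Lemma rank_bound (W : {set T}) w : w \in W -> rank W w < #|W|.
Proof.
move=> wW; apply/proper_card/properP; split.
  by apply/subsetP => u; rewrite inE => /andP[].
by exists w => //; rewrite inE (negbTE (ord_irr w)) andbF.
Qed.
End StrictLinear.

Section Cube.
Variable N : nat.
Local Notation D := 'I_N.
Local Notation V := {ffun 'I_N -> bool}.
Variable ord : rel V.
Hypothesis ord_linear : strict_linear ord.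

Definition agree (J : {set D}) (w a : V) : bool := [forall l in J, w l == a l].

Lemma agreeP (J : {set D}) (w a : V) : reflect {in J, w =1 a} (agree J w a).
Proof.
apply: (iffP forallP) => [agr l lJ | agr l]; last by apply/implyP => /agr->.
by apply/eqP; move: (agr l); rewrite lJ.
Qed.

Definition universal (r : nat) (Y : {set D}) (W : {set V}) : bool :=
  [forall J : {set D}, (J \subset Y) ==> (#|J| <= r) ==>
     [forall a : V, [exists w in W, agree J w a]]].

Lemma universalP r (Y : {set D}) (W : {set V}) :
  reflect (forall J : {set D}, J \subset Y -> #|J| <= r -> forall a : D -> bool,
             exists2 w, w \in W & {in J, w =1 a})
          (universal r Y W).
Proof.
apply: (iffP forallP) => [U J JY JR a | U J].
  move: (U J); rewrite JY JR => /forallP/(_ (finfun a)).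
  case/existsP => w /andP[wW /agreeP agr].
  by exists w => // l /agr->; rewrite ffunE.
apply/implyP => JY; apply/implyP => JR; apply/forallP => a.
have [w wW agr] := U J JY JR a; apply/existsP; exists w.
by rewrite wW; apply/agreeP.
Qed.

Lemma universalPn r (Y : {set D}) (W : {set V}) : ~~ universal r Y W ->
  exists (J : {set D}) (a : V),
    [/\ J \subset Y, #|J| <= r & forall w, w \in W -> ~~ agree J w a].
Proof.
case/forallPn => J; rewrite !negb_imply => /andP[JY /andP[JR /forallPn[a]]].
rewrite negb_exists => /forallP fail; exists J, a; split => // w wW.
by move: (fail w); rewrite wW.
Qed.

Lemma universal_mon r r' (Y Y' : {set D}) (W : {set V}) :
  r' <= r -> Y' \subset Y -> universal r Y W -> universal r' Y' W.
Proof.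
move=> le_r sub_Y /universalP U; apply/universalP => J JY JR.
by apply: U; [apply: subset_trans sub_Y | apply: leq_trans le_r].
Qed.

Definition segment (W : {set V}) n := [set w in W | rank ord W w < n].

(* The shortest universal initial segment [segment W n.+1]: its maximal element
   [c] realises a pattern [a] on a small set [J] which no smaller element of [W]
   realises. *)
Lemma least_universal_segment r (Y : {set D}) (W : {set V}) : universal r Y W ->
  exists n (J : {set D}) (a c : V),
    [/\ universal r Y (segment W n.+1), J \subset Y /\ #|J| <= r,
        c \in segment W n.+1, agree J c a &
        forall w, w \in W -> agree J w a -> n <= rank ord W w].
Proof.
move=> WU; have full : universal r Y (segment W #|W|).
  rewrite (_ : segment W _ = W) //; apply/setP => w.
  by rewrite inE andb_idr // => /(rank_bound ord_linear).
have [[|n] segU least] := ex_minnP (ex_intro (fun n => universal r Y (segment W n)) _ full).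
  move/universalP: segU => /(_ set0 (sub0set Y)).
  rewrite cards0 => /(_ isT (fun _ => false)).
  by case=> w; rewrite inE ltn0 andbF.
have /universalPn[J [a [JY JR fail]]] : ~~ universal r Y (segment W n).
  by apply/negP => /least; rewrite ltnn.
have [c cS agr_c] := elimT (universalP _ _ _) segU J JY JR a.
exists n, J, a, c; split => //; first exact/agreeP.
move=> w wW agr_w; rewrite leqNgt; apply/negP => lt_wn.
by move: (fail w); rewrite inE wW lt_wn agr_w => /(_ isT).
Qed.

Lemma universal_restrict r (Y J0 : {set D}) (W : {set V}) (a0 : V) y b :
  universal r.*2.+1 Y W -> J0 \subset Y -> #|J0| <= r -> y \in Y :\: J0 ->
  universal r (Y :\: (y |: J0)) [set w in W | agree J0 w a0 && (w y != b)].
Proof.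
move=> WU J0Y J0R; rewrite inE => /andP[yJ0 yY].
apply/universalP => J JY JR a.
have notJ l : l \in J -> l \notin y |: J0.
  by move=> /(subsetP JY); rewrite inE => /andP[].
pose a' l := if l \in J then a l else if l \in J0 then a0 l else ~~ b.
have J'Y : J :|: (y |: J0) \subset Y.
  by rewrite !subUset sub1set yY J0Y (subset_trans JY) ?subsetDl.
have J'R : #|J :|: (y |: J0)| <= r.*2.+1.
  rewrite -addnn -addnS (leq_trans (leq_card_setU _ _).1) // leq_add //.
  by rewrite cardsU1 yJ0.
have [w wW agr] := elimT (universalP _ _ _) WU _ J'Y J'R a'.
exists w; last by move=> l lJ; rewrite agr ?inE ?lJ // /a' lJ.
rewrite inE wW /=; apply/andP; split.
  apply/agreeP => l lJ0; rewrite agr ?(inE, lJ0, orbT) // /a' lJ0.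
  by case: ifP => // lJ; have := notJ l lJ; rewrite !inE lJ0 orbT.
rewrite agr; last by rewrite !inE eqxx orbT.
rewrite /a'; case: ifP => [yJ | _].
  by have := notJ y yJ; rewrite !inE eqxx.
by rewrite (negbTE yJ0); case: (b).
Qed.

Lemma universal_split r (Y : {set D}) (W : {set V}) :
  universal r.*2.+1 Y W -> r < #|Y| ->
  exists (X : {set D}) (W1 W2 : {set V}),
    [/\ #|X| <= r.+1, W1 \subset W /\ W2 \subset W,
        universal r Y W1, universal r (Y :\: X) W2 &
        forall w1 w2, w1 \in W1 -> w2 \in W2 -> ord w1 w2].
Proof.
move=> WU ltrY.
have WU' : universal r Y W by apply: universal_mon WU; rewrite // -addnn leqW ?leq_addl.
have [n [J0 [a0 [c [segU [J0Y J0R] cS agr_c least]]]]] := least_universal_segment WU'.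
have [y yY] : exists y, y \in Y :\: J0.
  apply/set0Pn; rewrite -card_gt0 cardsD subn_gt0 (leq_ltn_trans _ ltrY) //.
  exact: leq_trans (subset_leq_card (subsetIr _ _)) J0R.
exists (y |: J0), (segment W n.+1), [set w in W | agree J0 w a0 && (w y != c y)].
split.
- by rewrite cardsU1; move: yY; rewrite inE => /andP[-> _].
- by split; apply/subsetP => w; rewrite inE => /andP[].
- exact: segU.
- exact: universal_restrict.
move=> w1 w2; rewrite !inE => /andP[w1W le_w1n] /andP[w2W /andP[agr_w2 ne_c]].
move: cS; rewrite inE => /andP[cW le_cn].
have rank_c : rank ord W c = n by apply/eqP; rewrite eqn_leq -ltnS le_cn least.
have lt_n : n < rank ord W w2.
  rewrite ltn_neqAle least // andbT; apply: contra ne_c => /eqP eq_n.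
  by rewrite (rank_inj ord_linear w2W cW) // rank_c eq_n.
by rewrite -(rank_ltE ord_linear w1W w2W) (leq_trans le_w1n lt_n).
Qed.

(* Universality level and number of excluded coordinates that suffice to find
   increasing chains of length [S] realising patterns on [r] coordinates. *)
Fixpoint chain_level (r S : nat) : nat :=
  if S is S'.+1 then (chain_level r S').*2.+1 else r.
Fixpoint chain_cost (r S : nat) : nat :=
  if S is S'.+1 then (chain_level r S').+1 + chain_cost r S' else 0.

Lemma chain_level_ge r S : r <= chain_level r S.
Proof. by elim: S => //= S le_r; rewrite -addnn leqW // (leq_trans le_r) ?leq_addl. Qed.

(* Iterating the splitting step: outside a small set [X] of coordinates, any
   [S] patterns on any [r] coordinates are realised, in this order, by an
   increasing chain of members of [W]. *)
Lemma increasing_chains r S (Y : {set D}) (W : {set V}) :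
  universal (chain_level r S) Y W -> chain_cost r S <= #|Y| ->
  exists X : {set D}, #|X| <= chain_cost r S /\
    forall J : {set D}, J \subset Y :\: X -> #|J| <= r ->
    forall T : nat -> D -> bool, exists w : nat -> V,
      (forall s, s < S -> w s \in W /\ {in J, w s =1 T s}) /\
      (forall s, s.+1 < S -> ord (w s) (w s.+1)).
Proof.
elim: S Y W => [|S IH] Y W WU costY.
  by exists set0; split => [|J _ _ T]; [rewrite cards0 | exists (fun _ => [ffun => false])].
have ltY : chain_level r S < #|Y| by apply: leq_trans costY; rewrite /= addSn ltnS leq_addr.
have [X1 [W1 [W2 [X1R [W1W W2W] W1U W2U below]]]] := universal_split WU ltY.
have costY2 : chain_cost r S <= #|Y :\: X1|.
  rewrite cardsD leq_subRL ?subset_leq_card ?subsetIl //.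
  apply: leq_trans costY; rewrite /= leq_add // (leq_trans _ X1R) //.
  exact/subset_leq_card/subsetIr.
have [X2 [X2R chains]] := IH _ _ W2U costY2.
exists (X1 :|: X2); split; first exact: leq_trans (leq_card_setU X1 X2).1 (leq_add _ _).
move=> J JX JR T.
have JY : J \subset Y by apply: subset_trans JX (subsetDl _ _).
have JX2 : J \subset (Y :\: X1) :\: X2 by rewrite setDDl.
have JR' : #|J| <= chain_level r S by apply: leq_trans JR (chain_level_ge r S).
have [w0 w0W agr0] := elimT (universalP _ _ _) W1U J JY JR' (T 0).
have [w [ws_spec incr]] := chains J JX2 JR (fun s => T s.+1).
exists (fun s => if s is s'.+1 then w s' else w0); split.
  case=> [|s] lt_sS; first by split; first exact: subsetP W1W _ w0W.
  by have [wsW agr] := ws_spec s lt_sS; split => //; apply: subsetP W2W _ wsW.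
case=> [|s] lt_sS; last exact: incr.
by apply: below => //; have [] := ws_spec 0 lt_sS.
Qed.

Definition chain_free (r S : nat) (X : {set D}) : Prop :=
  forall J : {set D}, J \subset ~: X -> #|J| <= r ->
  forall T : nat -> D -> bool, exists w : nat -> V,
    (forall s, s < S -> {in J, w s =1 T s}) /\
    (forall s, s.+1 < S -> ord (w s) (w s.+1)).

Lemma cube_chains r S : chain_cost r S <= N ->
  exists X : {set D}, #|X| <= chain_cost r S /\ chain_free r S X.
Proof.
move=> costN; have fullU : universal (chain_level r S) [set: D] [set: V].
  by apply/universalP => J _ _ a; exists (finfun a) => // l _; rewrite ffunE.
have [|X [XR chains]] := increasing_chains fullU; first by rewrite cardsT card_ord.
exists X; split => // J JX JR T; rewrite -setTD in JX.
have [w [ws_spec incr]] := chains J JX JR T.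
by exists w; split => // s /ws_spec[].
Qed.
End Cube.

Section SparseSubset.
Variables (T : finType) (f : T -> {set T}) (x : nat).
Hypothesis small_f : forall q, #|f q| <= x.

(* Double counting: some point of [U] is forbidden by at most [x] points of [U]. *)
Lemma rarely_forbidden (U : {set T}) : U != set0 ->
  exists2 q, q \in U & #|[set q' in U | q \in f q']| <= x.
Proof.
rewrite -card_gt0 => U0.
case: (boolP [exists q in U, #|[set q' in U | q \in f q']| <= x]).
  by case/exists_inP => q; exists q.
move/exists_inPn => many.
have count (P : pred T) : #|[set q' in U | P q']| = \sum_(q' in U) (P q' : nat).
  by rewrite -sum1dep_card big_mkcondr; apply: eq_bigr => q' _; case: (P q').
have : #|U| * x.+1 <= #|U| * x.
  apply: (@leq_trans (\sum_(q in U) #|[set q' in U | q \in f q']|)).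
    by rewrite -sum_nat_const leq_sum // => q /many; rewrite -ltnNge.
  rewrite (eq_bigr _ (fun q _ => count _)) exchange_big -sum_nat_const leq_sum // => q' _.
  rewrite -count (leq_trans _ (small_f q')) // subset_leq_card //.
  by apply/subsetP => q; rewrite inE => /andP[].
by rewrite leq_pmul2l // ltnn.
Qed.

Lemma sparse_subset k (U : {set T}) : k * x.*2.+1 <= #|U| ->
  exists C : {set T}, [/\ C \subset U, #|C| = k &
    forall q q', q \in C -> q' \in C -> q' \in f q -> q' = q].
Proof.
elim: k U => [|k IH] U kU.
  by exists set0; split => [||q q']; rewrite ?sub0set ?cards0 ?inE.
have [q qU rare_q] : exists2 q, q \in U & #|[set q' in U | q \in f q']| <= x.
  by apply: rarely_forbidden; rewrite -card_gt0 (leq_trans _ kU) // mulSn addSn.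
pose U' := U :\: (q |: (f q :|: [set q' in U | q \in f q'])).
have kU' : k * x.*2.+1 <= #|U'|.
  have removed : #|U :&: (q |: (f q :|: [set q' in U | q \in f q']))| <= x.*2.+1.
    apply: leq_trans (subset_leq_card (subsetIr _ _)) _.
    rewrite cardsU1 -addnn -add1n leq_add ?leq_b1 //.
    exact: leq_trans (leq_card_setU _ _).1 (leq_add (small_f q) rare_q).
  by rewrite /U' cardsD; move: kU removed; rewrite mulSn; lia.
have [C' [C'U' C'k indep]] := IH U' kU'.
have qC' : q \notin C' by apply/negP => /(subsetP C'U'); rewrite inE setU11.
exists (q |: C'); split.
- by rewrite subUset sub1set qU (subset_trans C'U') ?subsetDl.
- by rewrite cardsU1 qC' C'k.
move=> a b; rewrite !inE => /predU1P[-> | aC] /predU1P[-> | bC] // b_fa.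
- by move: (subsetP C'U' b bC); rewrite !inE b_fa orbT.
- by move: (subsetP C'U' a aC); rewrite !inE b_fa !andbT => /andP[/norP[_ /norP[_ /negP]]].
- exact: indep.
Qed.
End SparseSubset.

Section ClassS.
Variables (T : finType) (E : rel T).
Hypothesis E_S : inS E.

Lemma same_refl a : same E a a.
Proof. by case: E_S => [[_ [refl _]] _]. Qed.

Lemma same_sym a b : same E a b -> same E b a.
Proof. by case: E_S => [[_ [_ [sym _]]] _]; apply: sym. Qed.

Lemma same_trans a b c : same E a b -> same E b c -> same E a c.
Proof. by case: E_S => [[_ [_ [_ trans]]] _]; apply: trans. Qed.

Lemma edge_within a b : same E a b -> E a b = false.
Proof.
case: E_S => [[[irr _] _] _]; case/orP => [/eqP<- | /andP[/negbTE//]].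
exact/negbTE.
Qed.

Lemma edge_across a b : ~~ same E a b -> E a b = ~~ E b a.
Proof.
case: E_S => [[[_ asym] _] _]; rewrite negb_or => /andP[_].
rewrite negb_and !negbK => /orP[] e; first by rewrite e (negbTE (asym _ _ e)).
by rewrite e; apply/negbTE/negP => /asym; rewrite e.
Qed.

Lemma edge_parity a b c d : ~~ same E a c -> same E a b -> same E c d ->
  a != b -> c != d -> E a c = E a d (+) E b c (+) E b d.
Proof.
move=> ac ab cd ne_ab ne_cd; case: E_S => _ /(_ a b c d ac ab cd ne_ab ne_cd).
by rewrite !oddD !oddb; case: (E a c); case: (E a d); case: (E b c); case: (E b d).
Qed.
End ClassS.

Section MarkedStructure.
Variables (T : finType) (Eb ltb : rel T) (k : nat) (t : 'I_k -> T) (pb : T -> 'I_k).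
Hypothesis Eb_S : inS Eb.
Hypothesis t_part : forall i y, same Eb (t i) y = (pb y == i).
Hypothesis t_edge : forall i j : 'I_k, i < j -> Eb (t i) (t j).
Hypothesis ltb_linear : strict_linear ltb.
Hypothesis ltb_intervals : forall a b c, same Eb a c -> ltb a b -> ltb b c -> same Eb a b.
Hypothesis t_order : forall i j : 'I_k, i < j -> ltb (t i) (t j).

Lemma marked_same y z : same Eb y z = (pb y == pb z).
Proof.
have ty : same Eb (t (pb y)) y by rewrite t_part.
apply/idP/eqP => [yz | eq_p].
  by apply/esym/eqP; rewrite -t_part (same_trans Eb_S ty yz).
by rewrite (same_trans Eb_S (same_sym Eb_S ty)) // t_part eq_p.
Qed.

Lemma pb_t i : pb (t i) = i.
Proof. by apply/eqP; rewrite -t_part same_refl. Qed.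

Lemma t_edgeE i j : i != j -> Eb (t i) (t j) = (i < j).
Proof.
move=> ne_ij; case: (ltngtP i j) => [lt_ij | lt_ji | /val_inj eq_ij]; first exact: t_edge.
  by rewrite (edge_across Eb_S) ?(t_edge lt_ji) // t_part pb_t eq_sym.
by rewrite eq_ij eqxx in ne_ij.
Qed.

(* Parity on the four vertices [y], [t (pb y)], [z], [t (pb z)]. *)
Lemma marked_edge y z : pb y != pb z -> t (pb y) != y -> t (pb z) != z ->
  Eb y z = ~~ Eb (t (pb z)) y (+) Eb (t (pb y)) z (+) (pb y < pb z).
Proof.
move=> ne_p ty tz; have ty_y : same Eb (t (pb y)) y by rewrite t_part.
have tz_z : same Eb (t (pb z)) z by rewrite t_part.
rewrite (edge_parity Eb_S _ (same_sym Eb_S ty_y) (same_sym Eb_S tz_z)) 1?eq_sym //;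
  last by rewrite marked_same.
by rewrite (edge_across Eb_S (a := y) (b := t (pb z))) ?marked_same ?pb_t // t_edgeE.
Qed.

(* Since parts are intervals, the order between two parts is the order of their
   marked vertices. *)
Lemma marked_order y z : pb y != pb z -> ltb y z = (pb y < pb z).
Proof.
have transfer a b a' b' : ltb a b -> ~~ same Eb a b -> same Eb a a' -> same Eb b b' ->
    ltb a' b'.
  move=> ab nab aa' bb'.
  have a'b : ltb a' b.
    have ne : a' != b by apply: contraNneq nab => <-.
    case/orP: (ord_total ltb_linear ne) => // ba'.
    by move: nab; rewrite (ltb_intervals aa' ab ba').
  have ne : a' != b'.
    by apply: contraNneq nab => eq_a'b'; rewrite (same_trans Eb_S aa') // eq_a'b' same_sym.
  case/orP: (ord_total ltb_linear ne) => // b'a'.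
  have b'b : same Eb b' a' := ltb_intervals (same_sym Eb_S bb') b'a' a'b.
  have b'_a : same Eb b' a by rewrite (same_trans Eb_S b'b) // same_sym.
  by move: nab; rewrite (same_trans Eb_S (same_sym Eb_S b'_a)) // same_sym.
have ty y' : same Eb (t (pb y')) y' by rewrite t_part.
move=> ne_p; have nyz : ~~ same Eb y z by rewrite marked_same.
have ntt : ~~ same Eb (t (pb y)) (t (pb z)) by rewrite t_part pb_t eq_sym.
case: ltngtP => [lt_yz | lt_zy | /val_inj eq_p]; last by rewrite eq_p eqxx in ne_p.
  exact: transfer (t_order lt_yz) ntt (ty y) (ty z).
apply/negbTE/negP => /transfer /(_ nyz (same_sym Eb_S (ty y)) (same_sym Eb_S (ty z))).
by apply/negP/ord_asym/t_order.
Qed.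
End MarkedStructure.

Record coding (T : finType) (E R Lt : rel T) (k : nat) (p : T -> 'I_k)
    (rho : 'I_k -> T -> bool) : Prop := Coding {
  coding_same : forall x u, same E x u = (p x == p u);
  coding_R : forall x u, R x u = (p x != p u) && rho (p x) u;
  coding_E_cross : forall x u, p x != p u ->
    E x u = ~~ rho (p u) x (+) rho (p x) u (+) (p x < p u);
  coding_E_same : forall x u, p x = p u -> E x u = false;
  coding_Lt_cross : forall x u, p x != p u -> Lt x u = (p x < p u);
  coding_Lt : strict_linear Lt }.

(* Every expansion in S^* has a coding: [p x] is the index of the marked vertex
   in the part of [x] and [rho i x] the edge from the [i]-th marked vertex. *)
Lemma expansion_coding (T : finType) (E R Lt : rel T) : inSstar E R Lt ->
  exists p rho, @coding T E R Lt (nparts E) p rho.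
Proof.
case=> _ [Tb [Eb [f [t [ltb [Eb_S [_ [[f_inj fE] [t_out [t_unique [t_edge
  [ltb_linear [ltb_intervals [t_order [R_def Lt_def]]]]]]]]]]]]]]].
have [pb pb_spec] := fin_all_exists t_unique.
have t_part i y : same Eb (t i) y = (pb y == i).
  by case: (pb_spec y) => tpb uniq; apply/idP/eqP => [/uniq-> | <-].
pose p x := pb (f x); pose rho i x := Eb (t i) (f x).
have same_f x u : same E x u = same Eb (f x) (f u) by rewrite /Defs.sameP !fE (inj_eq f_inj).
have p_same x u : same E x u = (p x == p u) by rewrite same_f (marked_same Eb_S t_part).
have t_f x : t (p x) != f x by apply: t_out.
exists p, rho; split => // [x u | x u ne_p | x u eq_p | x u ne_p | ].
- apply/idP/idP => [/R_def[ne [i [ti_x ti_u]]] | /andP[ne rho_u]].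
    rewrite -p_same ne; have -> : p x = i by apply/eqP; rewrite /p -t_part.
    exact: ti_u.
  by apply/R_def; rewrite p_same; split => //; exists (p x); rewrite t_part.
- by rewrite fE (marked_edge Eb_S t_part t_edge).
- by rewrite fE (edge_within Eb_S) // -same_f p_same eq_p.
- by rewrite Lt_def (marked_order Eb_S t_part ltb_linear ltb_intervals t_order).
case: ltb_linear => irr [trans total]; split; [|split] => [x | x y z | x y].
- by rewrite Lt_def.
- by rewrite !Lt_def; apply: trans.
- by move=> ne; rewrite !Lt_def total ?(inj_eq f_inj).
Qed.

Lemma coding_embedding (A B : finType) (EA RA LA : rel A) (EB RB LB : rel B)
    kA pA rhoA kB pB rhoB (g : A -> B) (phi : 'I_kA -> 'I_kB) :
  @coding A EA RA LA kA pA rhoA -> @coding B EB RB LB kB pB rhoB ->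
  injective g -> {homo phi : i j / i < j} ->
  (forall x, pB (g x) = phi (pA x)) ->
  (forall x l, l != pA x -> rhoB (phi l) (g x) = rhoA l x) ->
  (forall x u, pA x = pA u -> LA x u = LB (g x) (g u)) ->
  embeds_star EA RA LA EB RB LB.
Proof.
move=> codeA codeB g_inj phi_homo p_g rho_g Lt_g.
have phi_mono : {mono phi : i j / i < j}.
  move=> i j; case: (ltngtP i j) => [/phi_homo// | /phi_homo lt | /val_inj->].
    by apply/negbTE; rewrite -leqNgt ltnW.
  by rewrite ltnn.
have phi_inj : injective phi.
  move=> i j eq_ij; apply/val_inj; case: (ltngtP i j) => // lt.
    by move: lt; rewrite -phi_mono eq_ij ltnn.
  by move: lt; rewrite -phi_mono eq_ij ltnn.
exists g; split => // x u; case: (eqVneq (pA x) (pA u)) => [eq_p | ne_p].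
  have eq_pB : pB (g x) = pB (g u) by rewrite !p_g eq_p.
  rewrite (coding_E_same codeA eq_p) (coding_E_same codeB eq_pB).
  by rewrite (coding_R codeA) (coding_R codeB) eq_p eq_pB !eqxx Lt_g.
have ne_pB : pB (g x) != pB (g u) by rewrite !p_g (inj_eq phi_inj).
rewrite (coding_E_cross codeA ne_p) (coding_E_cross codeB ne_pB).
rewrite (coding_R codeA) (coding_R codeB).
rewrite (coding_Lt_cross codeA ne_p) (coding_Lt_cross codeB ne_pB).
by rewrite !p_g phi_mono (inj_eq phi_inj) !rho_g // eq_sym.
Qed.

(* The structure B_N of S: its parts are the coordinates [q < N]; a vertex
   [(q, y)] of part [q] carries a vector [y] of the cube [{0,1}^N], and vertices
   of distinct parts [q], [q'] are joined according to [y q' (+) y' q (+) (q < q')].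
   Through [y], any pattern of edges towards the other parts can be realised. *)
Section CubeGraph.
Variable N : nat.

Definition cube_vertex := ('I_N * {ffun 'I_N -> bool})%type.

Definition cube_edge : rel cube_vertex :=
  fun a b => (a.1 != b.1) && (a.2 b.1 (+) b.2 a.1 (+) (a.1 < b.1)).

Lemma cube_same a b : same cube_edge a b = (a.1 == b.1).
Proof.
case: a b => q y [q' z]; rewrite /Defs.sameP /cube_edge /=.
case: (eqVneq q q') => [<- | ne_q] /=; first by rewrite orbT.
rewrite xpair_eqE (negbTE ne_q) /=.
case: (ltngtP q q') => [_|_|/val_inj eq_q]; last by rewrite eq_q eqxx in ne_q.
  by case: (y q'); case: (z q).
by case: (y q'); case: (z q).
Qed.

Lemma cube_edge_S : inS cube_edge.
Proof.
split; first split.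
- split=> [[q y] | [q y] [q' z]]; rewrite /cube_edge /= ?eqxx // => /andP[ne_q e].
  rewrite eq_sym ne_q /=; move: e.
  case: (ltngtP q q') => [_|_|/val_inj eq_q]; last by rewrite eq_q eqxx in ne_q.
    by case: (y q'); case: (z q).
  by case: (y q'); case: (z q).
- split=> [u | ]; first by rewrite cube_same.
  split=> [u v | u v w]; rewrite !cube_same; first by rewrite eq_sym.
  by move=> /eqP-> /eqP->.
- case=> q1 u [q2 v] [q3 x] [q4 y]; rewrite !cube_same /= => ne_q13 /eqP<- /eqP<- _ _.
  rewrite /cube_edge /= ne_q13 /= !oddD !oddb.
  by case: (u q3); case: (v q3); case: (x q1); case: (y q1); case: (q1 < q3).
Qed.
End CubeGraph.

Section CubeExpansion.
Variables (N : nat) (RB LB : rel (cube_vertex N)) (kB : nat).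
Variables (pB : cube_vertex N -> 'I_kB) (rhoB : 'I_kB -> cube_vertex N -> bool).
Hypothesis codeB : coding (@cube_edge N) RB LB pB rhoB.
Local Notation V := {ffun 'I_N -> bool}.

Definition part_index (q : 'I_N) : 'I_kB := pB (q, [ffun => false]).

Lemma pB_cube q y : pB (q, y) = part_index q.
Proof. by apply/eqP; rewrite -(coding_same codeB) cube_same. Qed.

Lemma part_index_inj : injective part_index.
Proof. by move=> q q' /eqP; rewrite -(coding_same codeB) cube_same => /eqP. Qed.

Definition offset (q q' : 'I_N) : bool := rhoB (part_index q') (q, [ffun => false]).

Lemma rhoB_cube q q' y : q != q' -> rhoB (part_index q') (q, y) = y q' (+) offset q q'.
Proof.
move=> ne_q; have ne_p y' : pB (q, y') != pB (q', [ffun => false]).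
  by rewrite !pB_cube (inj_eq part_index_inj).
have := coding_E_cross codeB (ne_p y); have := coding_E_cross codeB (ne_p [ffun => false]).
rewrite /cube_edge /= ne_q !pB_cube /offset !ffunE /=.
by case: (rhoB (part_index q') (q, y)); case: (rhoB (part_index q') (q, [ffun => false]));
   case: (rhoB (part_index q) (q', [ffun => false])); case: (y q'); case: (q < q');
   case: (part_index q < part_index q').
Qed.

Definition part_order (q : 'I_N) : rel V := fun y y' => LB (q, y) (q, y').

Lemma part_order_linear q : strict_linear (part_order q).
Proof.
case: (coding_Lt codeB) => irr [trans total]; split; [|split] => [y | y y' y'' | y y' ne_y].
- exact: irr.
- exact: trans.
- by apply: total; rewrite xpair_eqE eqxx.
Qed.
End CubeExpansion.

Lemma sorted_enum_ord k (S : {set 'I_k}) : sorted (fun a b : 'I_k => a < b) (enum S).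
Proof.
rewrite /enum_mem -enumT; apply: sorted_filter => [a b c|]; first exact: ltn_trans.
by have := iota_ltn_sorted 0 k; rewrite -val_enum_ord sorted_map.
Qed.

(* The parts of A
   go, in increasing order, to the parts of the expansion indexed by a set [C]
   of coordinates; inside part [j], the vertex of rank [s] goes to the [s]-th
   term of a chain [w j] of the cube, increasing for the order of that part,
   whose coordinates in [C] realise the bits [rhoA] up to [offset]. *)
Section EmbedIntoCube.
Variables (A : finType) (EA RA LA : rel A) (kA : nat).
Variables (pA : A -> 'I_kA) (rhoA : 'I_kA -> A -> bool).
Hypothesis codeA : coding EA RA LA pA rhoA.
Variables (N : nat) (RB LB : rel (cube_vertex N)) (kB : nat).
Variables (pB : cube_vertex N -> 'I_kB) (rhoB : 'I_kB -> cube_vertex N -> bool).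
Hypothesis codeB : coding (@cube_edge N) RB LB pB rhoB.
Local Notation V := {ffun 'I_N -> bool}.
Local Notation pi := (part_index pB).

Variable C : {set 'I_N}.
Hypothesis C_card : #|C| = kA.

Lemma card_parts_of_C : kA = #|pi @: C|.
Proof. by rewrite card_imset ?C_card //; apply: part_index_inj codeB. Qed.

(* [part_map j] is the [j]-th smallest part of the expansion indexed by [C]. *)
Definition part_map (j : 'I_kA) : 'I_kB := enum_val (cast_ord card_parts_of_C j).

Lemma part_map_homo : {homo part_map : i j / i < j}.
Proof.
move=> i j lt_ij; rewrite /part_map !(enum_val_nth (part_map i)).
have lt_trans : transitive (fun a b : 'I_kB => a < b) by move=> b a c; apply: ltn_trans.
apply: (sorted_ltn_nth lt_trans) => //; first exact: sorted_enum_ord.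
  by rewrite inE -cardE ltn_ord.
by rewrite inE -cardE ltn_ord.
Qed.

Lemma part_map_inj : injective part_map.
Proof.
move=> i j eq_ij; apply/val_inj; case: (ltngtP i j) => // /part_map_homo.
  by rewrite eq_ij ltnn.
by rewrite eq_ij ltnn.
Qed.

Lemma part_map_image j : part_map j \in image pi C.
Proof.
have /imsetP[q qC eq_q] := enum_valP (cast_ord card_parts_of_C j).
by rewrite /part_map eq_q image_f.
Qed.

Definition part_coord (j : 'I_kA) : 'I_N := iinv (part_map_image j).

Lemma part_coord_in j : part_coord j \in C.
Proof. exact: mem_iinv. Qed.

Lemma pi_part_coord j : pi (part_coord j) = part_map j.
Proof. exact: f_iinv. Qed.

Lemma part_coord_inj : injective part_coord.
Proof. by move=> i j eq_c; apply: part_map_inj; rewrite -!pi_part_coord eq_c. Qed.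

Definition part_rank (x : A) := rank LA [set u | pA u == pA x] x.

Lemma part_rank_bound x : part_rank x < #|A|.
Proof.
by apply: leq_trans (max_card _); apply: (rank_bound (coding_Lt codeA)); rewrite inE.
Qed.

Lemma LA_part_rank x u : pA x = pA u -> LA x u = (part_rank x < part_rank u).
Proof.
move=> eq_p; rewrite /part_rank -eq_p (rank_ltE (coding_Lt codeA)) // inE ?eq_p //.
Qed.

Lemma part_rank_inj x u : pA x = pA u -> part_rank x = part_rank u -> x = u.
Proof.
move=> eq_p; rewrite /part_rank -eq_p.
by apply: (rank_inj (coding_Lt codeA)); rewrite inE ?eq_p.
Qed.

(* The pattern required at step [s] of the chain of part [j], at coordinate [l]. *)
Definition chain_pattern (j : 'I_kA) (s : nat) (l : 'I_N) : bool :=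
  [exists x, [&& pA x == j, part_rank x == s &
     [exists i, (part_coord i == l) && (rhoA i x (+) offset pB rhoB (part_coord j) l)]]].

Lemma chain_patternE x i :
  chain_pattern (pA x) (part_rank x) (part_coord i) =
  rhoA i x (+) offset pB rhoB (part_coord (pA x)) (part_coord i).
Proof.
apply/existsP/idP => [[x' /and3P[/eqP p_x' /eqP rk_x'] ] | bit].
  case/existsP => i' /andP[/eqP c_i' bit].
  by move: bit; rewrite (part_rank_inj p_x' rk_x') (part_coord_inj c_i').
by exists x; rewrite !eqxx /=; apply/existsP; exists i; rewrite eqxx.
Qed.

Lemma chains_embedding (w : 'I_kA -> nat -> V) :
  (forall j s, s < #|A| -> {in C :\ part_coord j, w j s =1 chain_pattern j s}) ->
  (forall j s, s.+1 < #|A| -> part_order LB (part_coord j) (w j s) (w j s.+1)) ->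
  embeds_star EA RA LA (@cube_edge N) RB LB.
Proof.
move=> w_pattern w_incr.
have w_ord j s s' : s < #|A| -> s' < #|A| ->
    part_order LB (part_coord j) (w j s) (w j s') = (s < s').
  exact: (increasingE (part_order_linear codeB (part_coord j)) (w_incr j)).
pose g x : cube_vertex N := (part_coord (pA x), w (pA x) (part_rank x)).
apply: (coding_embedding (g := g) (phi := part_map) codeA codeB _ part_map_homo).
- move=> x u [/part_coord_inj eq_p eq_w]; rewrite -eq_p in eq_w.
  apply: part_rank_inj eq_p _.
  have irr y : part_order LB (part_coord (pA x)) y y = false.
    exact/negbTE/(ord_irr (part_order_linear codeB _)).
  case: (ltngtP (part_rank x) (part_rank u)) => // lt.
    by move: (w_ord (pA x) _ _ (part_rank_bound x) (part_rank_bound u)); rewrite eq_w lt irr.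
  by move: (w_ord (pA x) _ _ (part_rank_bound u) (part_rank_bound x)); rewrite eq_w lt irr.
- by move=> x; rewrite (pB_cube codeB) pi_part_coord.
- move=> x l ne_l; rewrite -pi_part_coord (rhoB_cube codeB); last first.
    by rewrite (inj_eq part_coord_inj) eq_sym.
  rewrite w_pattern ?part_rank_bound ?chain_patternE ?addbK //.
  by rewrite !inE (inj_eq part_coord_inj) ne_l part_coord_in.
- move=> x u eq_p; rewrite (LA_part_rank eq_p) /g -eq_p.
  by rewrite -[LB _ _]/(part_order LB _ _ _) w_ord ?part_rank_bound.
Qed.

Variable X : 'I_N -> {set 'I_N}.
Hypothesis X_free : forall q, chain_free (part_order LB q) #|A| #|A| (X q).
Hypothesis C_sparse : forall q q', q \in C -> q' \in C -> q' \in X q -> q' = q.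
Hypothesis kA_le : kA <= #|A|.

Lemma cube_embedding : embeds_star EA RA LA (@cube_edge N) RB LB.
Proof.
have chains j : exists w : nat -> V,
    (forall s, s < #|A| -> {in C :\ part_coord j, w s =1 chain_pattern j s}) /\
    (forall s, s.+1 < #|A| -> part_order LB (part_coord j) (w s) (w s.+1)).
  apply: X_free.
    apply/subsetP => l; rewrite !inE => /andP[ne_l lC]; apply: contra ne_l => lX.
    by rewrite (C_sparse (part_coord_in j) lC lX).
  by rewrite (leq_trans _ kA_le) // -C_card subset_leq_card // subD1set.
have [w w_spec] := fin_all_exists chains.
by apply: (chains_embedding (w := w)) => j; have [] := w_spec j.
Qed.
End EmbedIntoCube.

(* Once [N] is large enough, every coded expansion of a structure [A] with at
   most [#|A|] parts embeds into every coded expansion of B_N: choose the sets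
   [X q] of non-free coordinates, then a set [C] of coordinates avoiding each
   other's sets, and build the chains. *)
Lemma embeds_into_cube (A : finType) (EA RA LA : rel A) kA pA rhoA
    (N : nat) (RB LB : rel (cube_vertex N)) kB pB rhoB :
  @coding A EA RA LA kA pA rhoA -> @coding _ (@cube_edge N) RB LB kB pB rhoB ->
  kA <= #|A| -> #|A|.+1 * (chain_cost #|A| #|A|).*2.+1 <= N ->
  embeds_star EA RA LA (@cube_edge N) RB LB.
Proof.
move=> codeA codeB kA_le N_large.
have free q : exists X : {set 'I_N}, #|X| <= chain_cost #|A| #|A| /\
    chain_free (part_order LB q) #|A| #|A| X.
  apply: (cube_chains (part_order_linear codeB q)); apply: leq_trans N_large.
  by rewrite -{1}[chain_cost _ _]mul1n leq_mul // -addnn leqW ?leq_addl.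
have [X X_spec] := fin_all_exists free.
have [|C [_ C_card C_sparse]] := @sparse_subset _ X _ (fun q => (X_spec q).1) kA [set: 'I_N].
  by rewrite cardsT card_ord (leq_trans _ N_large) // leq_mul2r (leqW kA_le) orbT.
exact: (cube_embedding codeA codeB C_card (fun q => (X_spec q).2) C_sparse).
Qed.

Theorem mainTheorem20 : expansion_property_S.
Proof.
move=> A EA _; pose N := #|A|.+1 * (chain_cost #|A| #|A|).*2.+1.
exists (cube_vertex N), (@cube_edge N); split; first exact: cube_edge_S.
move=> RA LA RB LB /expansion_coding[pA [rhoA codeA]] /expansion_coding[pB [rhoB codeB]].
apply: (embeds_into_cube codeA codeB) => //.
exact: leq_trans (leq_imset_card _ _) (max_card _).
Qed.
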